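(* Let $k,i\ge0$, let $g_1,g_2\in\mathcal M(k)$ with $g_1^*g_1\neq g_2^*g_2$. Then the quadratic form on $V_i$ \[ h\longmapsto Q_{A,2}(hg_1)-Q_{A,2}(hg_2) \] has polar rank at least $\max\{0,\,i-k-m+1\}$.
   Context: $q$ is an odd prime power. Fix $m\ge0$ and $c_0,\dots,c_m\in\mathbb F_q$ with $c_m\ne0$, and let $A(z)=c_0+\tfrac12\sum_{\ell=1}^m c_\ell(z^\ell+z^{-\ell})\in\mathbb F_q[z,z^{-1}]$. For a polynomial $f$, $Q_{A,2}(f)=\operatorname{CT}\,A(z)f(z)f(z^{-1})$, where $\operatorname{CT}$ denotes the constant term of a Laurent polynomial; equivalently $Q_{A,2}(f)=\sum_{j=0}^m c_j\sum_{i\ge j}f_if_{i-j}$. $\mathcal M(k)$ is the set of monic polynomials of degree $k$ in $\mathbb F_q[t]$, $V_i$ the space of polynomials of degree $\le i$, and for $g$ of degree $k$, $g^*(t)=t^kg(t^{-1})$. The polar rank of a quadratic form $Q$ is the rank of $(x,y)\mapsto Q(x+y)-Q(x)-Q(y)$. *)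

From HB Require Import structures.
From mathcomp Require Import all_boot all_order all_algebra all_field.
Set Implicit Arguments. Unset Strict Implicit. Unset Printing Implicit Defensive.
Import GRing.Theory.
Local Open Scope ring_scope.

Definition QA2 (F : fieldType) (m : nat) (c : nat -> F) (f : {poly F}) : F :=
  \sum_(j < m.+1) c j * \sum_(j <= i < size f) f`_i * f`_(i - j).

(* g^*(t) = t^k g(t^{-1}) for g of degree k *)
Definition recip (F : fieldType) (k : nat) (g : {poly F}) : {poly F} :=
  \poly_(i < k.+1) g`_(k - i).

Definition monic_deg (F : fieldType) (k : nat) (g : {poly F}) : bool :=
  (g \is monic) && (size g == k.+1).

Definition polar (F : fieldType) (Q : {poly F} -> F) (x y : {poly F}) : F :=
  Q (x + y) - Q x - Q y.

(* polar rank of Q restricted to V_i = polynomials of degree <= i: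
   rank of the Gram matrix of the polar form in the basis 1, t, ..., t^i *)
Definition polar_rank_Vi (F : fieldType) (i : nat) (Q : {poly F} -> F) : nat :=
  \rank (\matrix_(a < i.+1, b < i.+1) polar Q 'X^a 'X^b).

From HB Require Import structures.
From mathcomp Require Import all_boot all_order all_algebra all_field.
From mathcomp Require Import zify ring.
Set Implicit Arguments. Unset Strict Implicit. Unset Printing Implicit Defensive.
Import GRing.Theory.
Local Open Scope ring_scope.

(* Put W := 2 z^m A(z) (g1^* g1 - g2^* g2), a nonzero polynomial fixed by the
   reciprocal of order 2(m + k).  Via the constant-term formula, the polar form of
   h |-> Q(h g1) - Q(h g2) pairs t^a with t^b to the coefficient of z^(m+k+b-a) in W,
   so its Gram matrix on V_i is Toeplitz.  If deg W = m + k + d (d <= m + k by the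
   symmetry of W), the matrix vanishes above its d-th superdiagonal and carries the
   leading coefficient of W on it, hence has rank at least i + 1 - d.  Oddness of q
   makes 2 invertible. *)

Section Reciprocal.
Variable F : fieldType.
Implicit Types (p q W : {poly F}) (n : nat).

Lemma coef_recip n p j : (recip n p)`_j = if (j <= n)%N then p`_(n - j) else 0.
Proof. by rewrite coef_poly ltnS. Qed.

Lemma size_recip n p : (size (recip n p) <= n.+1)%N.
Proof. exact: size_poly. Qed.

Lemma recipD n p q : recip n (p + q) = recip n p + recip n q.
Proof. by apply/polyP=> j; rewrite coefD !coef_recip; case: ifP; rewrite ?coefD ?addr0. Qed.

Lemma recipZ n a p : recip n (a *: p) = a *: recip n p.
Proof. by apply/polyP=> j; rewrite coefZ !coef_recip; case: ifP; rewrite ?coefZ ?mulr0. Qed.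

HB.instance Definition _ n :=
  GRing.isSemilinear.Build F {poly F} {poly F} _ (recip n) (recipZ n, recipD n).

Lemma recipXn n j : (j <= n)%N -> recip n ('X^j : {poly F}) = 'X^(n - j).
Proof.
move=> hj; apply/polyP=> l; rewrite coef_recip !coefXn.
case: (leqP l n) => hl; last by have -> : (l == n - j)%N = false by apply/negbTE/eqP; lia.
by have -> : (n - l == j)%N = (l == n - j)%N by apply/eqP/eqP; lia.
Qed.

Lemma recipK n p : (size p <= n.+1)%N -> recip n (recip n p) = p.
Proof.
move=> hs; apply/polyP=> l; rewrite !coef_recip.
case: (leqP l n) => hl; first by rewrite leq_subr subKn.
by rewrite nth_default // (leq_trans hs).
Qed.

Lemma recipM n1 n2 p q : (size p <= n1.+1)%N -> (size q <= n2.+1)%N ->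
  recip (n1 + n2) (p * q) = recip n1 p * recip n2 q.
Proof.
move=> hp hq; rewrite -(take_poly_id hp) -(take_poly_id hq) /take_poly !poly_def.
rewrite mulr_suml !linear_sum mulr_suml; apply: eq_bigr => j1 _.
rewrite !mulr_sumr linear_sum; apply: eq_bigr => j2 _.
have := ltn_ord j1; have := ltn_ord j2; rewrite !ltnS => hj2 hj1.
rewrite -!scalerAl -!scalerAr !linearZ /= -exprD !recipXn ?leq_add // -scalerAl -scalerAr -exprD.
by congr (_ *: (_ *: 'X^_)); lia.
Qed.

Lemma recip_XnM j n p : (size p <= n.+1)%N -> recip (j + n) ('X^j * p) = recip n p.
Proof. by move=> hp; rewrite recipM ?size_polyXn // recipXn // subnn mul1r. Qed.

Lemma recip_shift j n p : (size p <= n.+1)%N -> recip (j + n) p = 'X^j * recip n p.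
Proof.
by move=> hp; rewrite -{1}[p]mul1r recipM ?size_poly1 // -(expr0 'X) recipXn // subn0.
Qed.

Lemma size_mul_recip n p : (size p <= n.+1)%N -> (size (p * recip n p)%R <= (n + n).+1)%N.
Proof.
move=> hp; apply: leq_trans (size_polyMleq _ _) _.
by move: (size_recip n p); lia.
Qed.

Lemma recip_mul_recip n p : (size p <= n.+1)%N ->
  recip (n + n) (p * recip n p) = p * recip n p.
Proof. by move=> hp; rewrite recipM ?size_recip // recipK // mulrC. Qed.

Lemma coef_self_recip n W j : recip n W = W -> (j <= n)%N -> W`_(n - j) = W`_j.
Proof. by move=> hW hj; rewrite -[in RHS]hW coef_recip hj. Qed.

Lemma coefXnM_self_recip s W a b : (size W <= (s + s).+1)%N -> recip (s + s) W = W ->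
  ('X^a * W)`_(s + b) = ('X^b * W)`_(s + a).
Proof.
move=> hs hW; rewrite !coefXnM; case: ltnP => h1; case: ltnP => h2 //.
- by rewrite nth_default //; apply: leq_trans hs _; lia.
- by rewrite nth_default //; apply: leq_trans hs _; lia.
- by rewrite -(coef_self_recip hW (j := (s + b - a)%N)); [congr (_`_ _)|]; lia.
Qed.

Lemma size_self_recip_gt s W : W != 0 -> recip (s + s) W = W -> (s < size W)%N.
Proof.
move=> W0 hW; rewrite ltnNge; apply: contra W0 => hs.
apply/eqP/polyP => j; rewrite coef0; case: (ltnP j (size W)) => hj; last exact: nth_default.
by rewrite -(coef_self_recip hW (j := j)); [apply: nth_default; apply: leq_trans (hs) _|]; lia.
Qed.

Lemma coef_mul_recip N p j : (size p <= N.+1)%N ->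
  (p * recip N p)`_(N + j) = \sum_(j <= u < size p) p`_u * p`_(u - j).
Proof.
move=> hs; have hsj : (size p <= (N + j).+1)%N by apply: leq_trans hs _; lia.
rewrite (big_nat_widen _ _ _ _ _ hsj) big_mkcond /= coefM.
rewrite -(big_mkord xpredT (fun u => p`_u * (recip N p)`_(N + j - u))).
rewrite (@big_cat_nat _ _ _ j) //=; last by lia.
rewrite big_nat_cond big1 ?add0r => [|u]; last first.
  rewrite andbT => /andP[_ hu]; rewrite coef_recip ifF ?mulr0 //; lia.
apply: eq_big_nat => u /andP[hju hu]; rewrite coef_recip ifT; last by lia.
have -> : (N - (N + j - u) = u - j)%N by lia.
by case: ltnP => // hsu; rewrite nth_default ?mul0r.
Qed.

End Reciprocal.

Section QuadraticForm.
Variables (F : fieldType) (m : nat) (c : nat -> F).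
Implicit Types (f g h : {poly F}).

(* [Apoly] is 2 z^m A(z). *)
Definition Apoly : {poly F} := \sum_(l < m.+1) c l *: ('X^(m + l) + 'X^(m - l)).

Lemma size_Apoly : (size Apoly <= (m + m).+1)%N.
Proof.
apply/leq_sizeP => j hj; rewrite coef_sum big1 // => l _.
have := ltn_ord l; rewrite ltnS => hl.
rewrite coefZ coefD !coefXn.
have -> : (j == m + l)%N = false by apply/negbTE/eqP; lia.
have -> : (j == m - l)%N = false by apply/negbTE/eqP; lia.
by rewrite addr0 mulr0.
Qed.

Lemma recip_Apoly : recip (m + m) Apoly = Apoly.
Proof.
rewrite linear_sum; apply: eq_bigr => l _ /=.
have := ltn_ord l; rewrite ltnS => hl.
rewrite linearZ linearD /= !recipXn; try lia.
have -> : (m + m - (m + l) = m - l)%N by lia.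
have -> : (m + m - (m - l) = m + l)%N by lia.
by rewrite addrC.
Qed.

Lemma Apoly_neq0 : c m != 0 -> (2%:R : F) != 0 -> Apoly != 0.
Proof.
move=> cm0 two0; apply: contraNneq cm0 => /(congr1 (fun p : {poly F} => p`_(m + m))).
rewrite coef0 coef_sum big_ord_recr /= big1 => [|l _]; last first.
  have := ltn_ord l => hl.
  rewrite coefZ coefD !coefXn.
  have -> : (m + m == m + l)%N = false by apply/negbTE/eqP; lia.
  have -> : (m + m == m - l)%N = false by apply/negbTE/eqP; lia.
  by rewrite addr0 mulr0.
rewrite add0r coefZ coefD !coefXn eqxx.
case: (posnP m) => [m0|m_gt0].
  by rewrite m0 /= -mulr2n => /eqP; rewrite mulf_eq0 => /orP[// | two_eq0]; case/negP: two0.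
have -> : (m + m == m - m)%N = false by apply/negbTE/eqP; lia.
by rewrite /= addr0 mulr1 => /eqP.
Qed.

Lemma QA2_mulr2n N f : (size f <= N.+1)%N -> (m <= N)%N ->
  QA2 m c f *+ 2 = (Apoly * (f * recip N f))`_(m + N).
Proof.
move=> hs hm; rewrite /QA2 /Apoly mulr_suml coef_sum -sumrMnl; apply: eq_bigr => l _.
have := ltn_ord l; rewrite ltnS => hl.
rewrite -scalerAl coefZ mulrDl coefD !coefXnM !ifF; try lia.
have -> : (m + N - (m + l) = N - l)%N by lia.
have -> : (m + N - (m - l) = N + l)%N by lia.
have -> : (f * recip N f)`_(N - l) = (f * recip N f)`_(N + l).
  rewrite -(coef_self_recip (recip_mul_recip hs) (j := (N + l)%N)); last by lia.
  by congr (_`_ _); lia.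
by rewrite coef_mul_recip // -mulrnAr mulr2n.
Qed.

Lemma coef_Apoly_mulXn_recip N k g a b : (size g <= k.+1)%N -> (b + k <= N)%N ->
  (Apoly * ('X^a * g * recip N ('X^b * g)))`_(m + N) =
  ('X^a * (Apoly * (g * recip k g)))`_(m + k + b).
Proof.
move=> hg hbk.
have sXbg : (size ('X^b * g)%R <= (b + k).+1)%N.
  by apply: leq_trans (size_polyMleq _ _) _; rewrite size_polyXn; lia.
rewrite -[X in recip X _](subnK hbk) recip_shift // recip_XnM //.
have -> : Apoly * ('X^a * g * ('X^(N - (b + k)) * recip k g)) =
    'X^(N - (b + k)) * ('X^a * (Apoly * (g * recip k g))) by ring.
rewrite coefXnM ifF; last by lia.
by have -> : (m + N - (N - (b + k)) = m + k + b)%N by lia.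
Qed.

Lemma polar_QA2_mulXn k g a b : (size g <= k.+1)%N ->
  polar (fun h => QA2 m c (h * g)) 'X^a 'X^b *+ 2 =
  ('X^a * (Apoly * (g * recip k g)))`_(m + k + b) +
  ('X^b * (Apoly * (g * recip k g)))`_(m + k + a).
Proof.
move=> hg; set N := (a + b + k + m)%N.
have QA2_N h : (size h <= (a + b).+1)%N ->
    QA2 m c (h * g) *+ 2 = (Apoly * (h * g * recip N (h * g)))`_(m + N).
  move=> hh; apply: QA2_mulr2n; last by lia.
  by apply: leq_trans (size_polyMleq _ _) _; lia.
have sXn j : (j <= a + b)%N -> (size ('X^j : {poly F}) <= (a + b).+1)%N.
  by rewrite size_polyXn.
rewrite /polar !mulrnBl !QA2_N ?sXn ?leq_addr ?leq_addl //; last first.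
  by apply: leq_trans (size_polyD _ _) _; rewrite geq_max !sXn ?leq_addr ?leq_addl.
rewrite -(@coef_Apoly_mulXn_recip N k g a b hg); last by lia.
rewrite -(@coef_Apoly_mulXn_recip N k g b a hg); last by lia.
rewrite mulrDl raddfD /= !(mulrDl, mulrDr) !coefD; ring.
Qed.

Definition gram_symbol k g1 g2 : {poly F} :=
  Apoly * (g1 * recip k g1 - g2 * recip k g2).

Section GramSymbol.
Variables (k : nat) (g1 g2 : {poly F}).
Hypotheses (sg1 : (size g1 <= k.+1)%N) (sg2 : (size g2 <= k.+1)%N).

Lemma size_sub_mul_recip : (size (g1 * recip k g1 - g2 * recip k g2)%R <= (k + k).+1)%N.
Proof.
apply: leq_trans (size_polyD _ _) _.
by rewrite size_polyN geq_max !size_mul_recip.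
Qed.

Lemma size_gram_symbol : (size (gram_symbol k g1 g2) <= (m + k + (m + k)).+1)%N.
Proof.
apply: leq_trans (size_polyMleq _ _) _.
by move: size_Apoly size_sub_mul_recip; lia.
Qed.

Lemma recip_gram_symbol : recip (m + k + (m + k)) (gram_symbol k g1 g2) = gram_symbol k g1 g2.
Proof.
rewrite addnACA recipM ?size_Apoly ?size_sub_mul_recip // recip_Apoly raddfB /=.
by rewrite !recip_mul_recip.
Qed.

Lemma gram_symbol_neq0 : c m != 0 -> (2%:R : F) != 0 ->
  g1 * recip k g1 != g2 * recip k g2 -> gram_symbol k g1 g2 != 0.
Proof. by move=> cm0 two0 hne; rewrite mulf_neq0 ?Apoly_neq0 // subr_eq0. Qed.

Lemma polar_QA2_diff_mulXn a b : (2%:R : F) != 0 ->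
  polar (fun h => QA2 m c (h * g1) - QA2 m c (h * g2)) 'X^a 'X^b =
  ('X^a * gram_symbol k g1 g2)`_(m + k + b).
Proof.
move=> two0; apply: (mulIf two0); rewrite !mulr_natr.
have -> : polar (fun h => QA2 m c (h * g1) - QA2 m c (h * g2)) 'X^a 'X^b =
    polar (fun h => QA2 m c (h * g1)) 'X^a 'X^b - polar (fun h => QA2 m c (h * g2)) 'X^a 'X^b.
  by rewrite /polar; ring.
rewrite mulrnBl (@polar_QA2_mulXn k g1 a b sg1) (@polar_QA2_mulXn k g2 a b sg2) mulr2n.
rewrite {2}(coefXnM_self_recip _ _ size_gram_symbol recip_gram_symbol).
by rewrite /gram_symbol !mulrBr !coefB; ring.
Qed.

End GramSymbol.
End QuadraticForm.

Lemma mxrank_band_ge (F : fieldType) n d (M : 'M[F]_n) :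
  (forall a b : 'I_n, (a + d < b)%N -> M a b = 0) ->
  (forall a b : 'I_n, (a + d)%N = b -> M a b != 0) ->
  (n - d <= \rank M)%N.
Proof.
move=> M0 Md; case: (leqP n d) => [|ltdn]; first by rewrite -subn_eq0 => /eqP->.
have row_lt (x : 'I_(n - d)) : (x < n)%N by have := ltn_ord x; lia.
have col_lt (x : 'I_(n - d)) : (x + d < n)%N by have := ltn_ord x; lia.
pose S := rowsub (fun x => Ordinal (row_lt x)) (colsub (fun x => Ordinal (col_lt x)) M).
have rankS : \rank S = (n - d)%N.
  apply: mxrank_unit; rewrite unitmxE unitfE det_trig.
    by apply/prodf_neq0 => x _; rewrite !mxE Md.
  by apply/is_trig_mxP => x y ltxy; rewrite !mxE M0 //=; lia.
rewrite -rankS /S rowsubE; apply: leq_trans (mxrankM_maxr _ _) _.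
by rewrite -[M in colsub _ M]mulmx1 -mulmx_colsub; apply: mxrankM_maxl.
Qed.

Lemma mxrank_self_recip_toeplitz (F : fieldType) n s (W : {poly F}) :
  W != 0 -> (size W <= (s + s).+1)%N -> recip (s + s) W = W ->
  (n - s <= \rank (\matrix_(a < n, b < n) ('X^a * W)`_(s + b))%R)%N.
Proof.
move=> W0 sW rW; have ltW := size_self_recip_gt W0 rW.
have [t sWt] : exists t, size W = t.+1.
  by exists (size W).-1; rewrite prednK // (leq_ltn_trans _ ltW).
apply: leq_trans (mxrank_band_ge (d := (t - s)%N) _ _); first lia.
- move=> a b hab; rewrite mxE coefXnM; case: ltnP => // _.
  by apply: nth_default; rewrite sWt; lia.
- move=> a b hab; rewrite mxE coefXnM ifF; last by lia.
  have -> : (s + b - a = (size W).-1)%N by rewrite sWt; lia.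
  by rewrite -lead_coefE lead_coef_eq0.
Qed.

Lemma two_neq0_odd_card (F : finFieldType) : odd #|F| -> (2%:R : F) != 0.
Proof.
move=> oddF; apply: contraTneq oddF => two0.
have ch2 : 2%N \in [pchar F] by rewrite inE /= two0.
have := finNzRing_gt1 F; rewrite (card_pprimeChar ch2) oddX orbF.
by case: logn.
Qed.

Theorem lemma4p1 (F : finFieldType) (hodd : odd #|F|)
  (m : nat) (c : nat -> F) (hcm : c m != 0)
  (k i : nat) (g1 g2 : {poly F})
  (hg1 : monic_deg k g1) (hg2 : monic_deg k g2)
  (hne : recip k g1 * g1 != recip k g2 * g2) :
  (i.+1 - (k + m) <= polar_rank_Vi i (fun h => (QA2 m c (h * g1) - QA2 m c (h * g2))%R))%N.
Proof.
move: hg1 hg2 => /andP[_ /eqP/eq_leq sg1] /andP[_ /eqP/eq_leq sg2].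
have two0 := two_neq0_odd_card hodd.
rewrite /polar_rank_Vi addnC.
under eq_mx do rewrite (polar_QA2_diff_mulXn _ _ sg1 sg2 _ _ two0).
apply: mxrank_self_recip_toeplitz.
- by rewrite gram_symbol_neq0 // mulrC [g2 * _]mulrC.
- exact: size_gram_symbol.
- exact: recip_gram_symbol.
Qed.
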